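(* In the algorithm DOBGA described in the context, let $\mathbf{r}_i(t)=\mathbf{x}_i(t)-\mathbf{y}_i(t)$. If $\|\widetilde{\nabla}f_{t,i}(\mathbf{x})\|\le G_{1}$ for all $i\in[N]$, $t\in[T]$, $\mathbf{x}\in\mathcal{X}$, then $\|\mathbf{r}_{i}(t+1)\|\le\eta_{t}(1-1/e)G_{1}$ for all $t\in[T]$ and $i\in[N]$.
   Context: $\mathcal{X}=\prod_{l=1}^n[0,a_l]$, $\mathcal{K}\subseteq\mathcal{X}$ a bounded convex set. $N$ nodes on a connected undirected graph with neighbor sets $\mathcal{N}_i$; weight matrix $\mathbf{A}=[a_{ij}]\in\mathbb{R}_+^{N\times N}$ symmetric, doubly stochastic, $a_{ij}=0$ if $j\notin\mathcal{N}_i\cup\{i\}$. For each $t,i$, $\widetilde{\nabla}f_{t,i}$ is a stochastic gradient oracle of a function $f_{t,i}:\mathcal{X}\to\mathbb{R}_+$. Algorithm DOBGA with step sizes $\eta_t>0$: initialize $\mathbf{x}_i(1)\in\mathcal{K}$; for $t=1,\dots,T$ and each $i$, draw $z_i(t)\in[0,1]$ with $\Pr(\mathbf{Z}\le z)=\frac{e^{z-1}-1/e}{1-1/e}$, set $\mathbf{y}_i(t+1)=\sum_{j\in\mathcal{N}_i\cup\{i\}}a_{ij}\mathbf{x}_j(t)+\eta_t(1-1/e)\widetilde{\nabla}f_{t,i}(z_i(t)\mathbf{x}_i(t))$ and $\mathbf{x}_i(t+1)=\arg\min_{\mathbf{z}\in\mathcal{K}}\|\mathbf{z}-\mathbf{y}_i(t+1)\|$.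 *)

From HB Require Import structures.
From mathcomp Require Import all_boot all_order all_algebra.
From mathcomp Require Import all_classical all_reals all_analysis.
Set Implicit Arguments. Unset Strict Implicit. Unset Printing Implicit Defensive.
Import Order.TTheory GRing.Theory Num.Theory.
Local Open Scope ring_scope.
Local Open Scope classical_set_scope.

Definition enorm (R : realType) (n : nat) (v : 'rV[R]_n) : R :=
  Num.sqrt (\sum_(l < n) (v ord0 l) ^+ 2).

Definition box (R : realType) (n : nat) (a : 'I_n -> R) : set 'rV[R]_n :=
  [set v | forall l : 'I_n, 0 <= v ord0 l <= a l].

Definition convex_rv (R : realType) (n : nat) (K : set 'rV[R]_n) : Prop :=
  forall u v, K u -> K v -> forall lam : R, 0 <= lam <= 1 ->
    K (lam *: u + (1 - lam) *: v).

Definition bounded_rv (R : realType) (n : nat) (K : set 'rV[R]_n) : Prop :=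
  exists M : R, forall v, K v -> enorm v <= M.

Definition is_proj (R : realType) (n : nat) (K : set 'rV[R]_n) (y z : 'rV[R]_n) : Prop :=
  K z /\ forall w, K w -> enorm (z - y) <= enorm (w - y).

Definition conn_undirected_graph (N : nat) (adj : rel 'I_N) : Prop :=
  (forall i j, adj i j = adj j i) /\ (forall i, ~~ adj i i) /\
  (forall i j, connect adj i j).

Definition weight_matrix (R : realType) (N : nat) (adj : rel 'I_N) (A : 'M[R]_N) : Prop :=
  (forall i j, 0 <= A i j) /\ (forall i j, A i j = A j i) /\
  (forall i, \sum_j A i j = 1) /\ (forall j, \sum_i A i j = 1) /\
  (forall i j, ~~ adj i j -> j != i -> A i j = 0).

(* The projection x_i(t+1) of y_i(t+1) onto K is at least as close to y_i(t+1)
   as any other point of K.  The consensus average w = sum_j a_ij x_j(t) is such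
   a point: the x_j(t) lie in K (they are projections, or initial points) and w
   is a convex combination of them.  Since y_i(t+1) - w is eta_t (1 - 1/e) times
   a stochastic gradient evaluated at z_i(t) x_i(t), which lies in the box X,
   the distance is at most eta_t (1 - 1/e) G_1. *)

From HB Require Import structures.
From mathcomp Require Import all_boot all_order all_algebra.
From mathcomp Require Import all_classical all_reals all_analysis.
Set Implicit Arguments. Unset Strict Implicit. Unset Printing Implicit Defensive.
Import Order.TTheory GRing.Theory Num.Theory.
Local Open Scope ring_scope.
Local Open Scope classical_set_scope.

Lemma enormZ (R : realType) (n : nat) (c : R) (v : 'rV[R]_n) :
  enorm (c *: v) = `|c| * enorm v.
Proof.
rewrite /enorm; under eq_bigr => l _ do rewrite mxE exprMn.
by rewrite -mulr_sumr sqrtrM ?sqr_ge0 // sqrtr_sqr.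
Qed.

Lemma is_proj_dist_le_shift (R : realType) (n : nat) (K : set 'rV[R]_n)
    (w d p : 'rV[R]_n) :
  K w -> is_proj K (w + d) p -> enorm (p - (w + d)) <= enorm d.
Proof.
move=> Kw [_ /(_ w Kw)]; rewrite [- (w + d)]opprD addNKr.
by rewrite -[- d]scaleN1r enormZ normrN normr1 mul1r.
Qed.

Lemma convex_rv_sum (R : realType) (n : nat) (K : set 'rV[R]_n) (I : eqType)
    (s : seq I) (p : I -> 'rV[R]_n) (w : I -> R) :
  convex_rv K -> (forall i, K (p i)) -> (forall i, 0 <= w i) ->
  \sum_(i <- s) w i = 1 -> K (\sum_(i <- s) w i *: p i).
Proof.
move=> cK Kp w0; elim: s w w0 => [|i s IH] w w0.
  by rewrite big_nil => /eqP; rewrite eq_sym oner_eq0.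
rewrite !big_cons; set S := \sum_(j <- s) w j => wS1.
have wi : w i = 1 - S by rewrite -wS1 addrK.
have S0 : 0 <= S by apply: sumr_ge0.
have [S_eq0|S_neq0] := eqVneq S 0.
  have /allP ws0 : all (fun j => true ==> (w j == 0)) s.
    by rewrite -psumr_eq0 // -/S S_eq0.
  rewrite big_seq big1 => [|j /ws0 /= /eqP ->]; last by rewrite scale0r.
  by rewrite addr0 wi S_eq0 subr0 scale1r.
have -> : \sum_(j <- s) w j *: p j = S *: \sum_(j <- s) (w j / S) *: p j.
  rewrite scaler_sumr; apply: eq_bigr => j _.
  by rewrite scalerA mulrCA mulfV // mulr1.
have Kq : K (\sum_(j <- s) (w j / S) *: p j).
  apply: IH => [j|]; first exact: divr_ge0.
  by rewrite -mulr_suml mulfV.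
have := cK _ _ (Kp i) Kq (w i); rewrite wi subKr; apply.
by rewrite -wi w0 /= wi lerBlDr lerDl.
Qed.

Lemma weight_matrix_mix_in (R : realType) (n N : nat) (K : set 'rV[R]_n)
    (adj : rel 'I_N) (A : 'M[R]_N) (p : 'I_N -> 'rV[R]_n) (i : 'I_N) :
  convex_rv K -> weight_matrix adj A -> (forall j, K (p j)) ->
  K (\sum_(j | adj i j || (j == i)) A i j *: p j).
Proof.
move=> cK [A0 [_ [Arow [_ Aadj]]]] Kp.
have -> : \sum_(j | adj i j || (j == i)) A i j *: p j =
          \sum_(j <- index_enum 'I_N) A i j *: p j.
  rewrite big_mkcond; apply: eq_bigr => j _.
  case: ifP => // /negbT; rewrite negb_or => /andP [nadj neq].
  by rewrite Aadj // scale0r.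
exact: convex_rv_sum.
Qed.

Lemma box_scale (R : realType) (n : nat) (a : 'I_n -> R) (c : R)
    (v : 'rV[R]_n) :
  0 <= c <= 1 -> box a v -> box a (c *: v).
Proof.
move=> /andP [c0 c1] bv l; have /andP [v0 va] := bv l.
rewrite mxE mulr_ge0 //=; apply: le_trans va.
by rewrite ler_piMl.
Qed.

Lemma projected_iterates_in (R : realType) (n N T : nat) (K : set 'rV[R]_n)
    (x y : nat -> 'I_N -> 'rV[R]_n) :
  (forall i, K (x 1%N i)) ->
  (forall t i, (1 <= t <= T)%N -> is_proj K (y t.+1 i) (x t.+1 i)) ->
  forall t i, (1 <= t <= T.+1)%N -> K (x t i).
Proof.
move=> x1 proj [i //|t]; elim: t => [|t IH] i tT; first exact: x1.
by case: (proj t.+1 i).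
Qed.

Lemma one_sub_expRN1_ge0 (R : realType) : 0 <= 1 - (expR 1 : R)^-1.
Proof. by rewrite subr_ge0 invf_le1 ?expR_gt0 // -expR0 ler_expR. Qed.

Theorem lemma15 (R : realType) (n N T : nat) (a : 'I_n -> R)
  (K : set 'rV[R]_n) (adj : rel 'I_N) (A : 'M[R]_N)
  (g : nat -> 'I_N -> 'rV[R]_n -> 'rV[R]_n)
  (eta : nat -> R) (z : nat -> 'I_N -> R)
  (x y : nat -> 'I_N -> 'rV[R]_n) (G1 : R) :
  (forall l, 0 <= a l) ->
  K `<=` box a -> convex_rv K -> bounded_rv K ->
  conn_undirected_graph adj -> weight_matrix adj A ->
  (forall t, (1 <= t <= T)%N -> 0 < eta t) ->
  (forall i, K (x 1%N i)) ->
  (forall t i, (1 <= t <= T)%N -> 0 <= z t i <= 1) ->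
  (forall t i, (1 <= t <= T)%N ->
     y t.+1 i = \sum_(j | adj i j || (j == i)) A i j *: x t j
                + (eta t * (1 - (expR 1)^-1)) *: g t i (z t i *: x t i)) ->
  (forall t i, (1 <= t <= T)%N -> is_proj K (y t.+1 i) (x t.+1 i)) ->
  (forall t i v, (1 <= t <= T)%N -> box a v -> enorm (g t i v) <= G1) ->
  forall t i, (1 <= t <= T)%N ->
    enorm (x t.+1 i - y t.+1 i) <= eta t * (1 - (expR 1)^-1) * G1.
Proof.
move=> _ Kbox cK _ _ wA eta0 x1 z01 yE proj gG t i tT.
have xtK j : K (x t j).
  by apply: (projected_iterates_in x1 proj); case/andP: tT => -> /leqW.
have c0 : 0 <= eta t * (1 - (expR 1)^-1).
  by rewrite mulr_ge0 ?one_sub_expRN1_ge0 ?ltW ?eta0.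
have Kw := weight_matrix_mix_in i cK wA xtK.
have := proj t i tT; rewrite yE // => /(is_proj_dist_le_shift Kw).
rewrite enormZ ger0_norm // => /le_trans; apply.
rewrite ler_wpM2l // gG //.
exact: box_scale (z01 t i tT) (Kbox _ (xtK i)).
Qed.
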